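(* Let $G=(V,E)$ be a finite loopless graph with $V\neq\emptyset$, with edge weights $\mathbf{v}=(v_e)_{e\in E}$, and let $q_1,q_2$ be indeterminates. Then \[ Z_G(q_2,\mathbf{v})=\sum_{\pi\in\Pi(V)}(q_2/q_1)^{\underline{|\pi|}}\prod_{B\in\pi}Z_{G[B]}(q_1,\mathbf{v}), \] equivalently \[ Z_G(q_2,\mathbf{v})=\sum_{\pi\in\Pi(V)}\Bigl(\prod_{j=0}^{|\pi|-1}(q_2-jq_1)\Bigr)\prod_{B\in\pi}\widehat{Z}_{G[B]}(q_1,\mathbf{v}), \] or \[ \widehat{Z}_G(q_2,\mathbf{v})=\sum_{\pi\in\Pi(V)}\Bigl(\prod_{j=1}^{|\pi|-1}(q_2-jq_1)\Bigr)\prod_{B\in\pi}\widehat{Z}_{G[B]}(q_1,\mathbf{v}). \]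
   Context: $Z_H(q,\mathbf{v})=\sum_{A\subseteq E(H)}q^{k(A)}\prod_{e\in A}v_e$ is the multivariate Tutte polynomial of a finite graph $H$, where $k(A)$ is the number of connected components of $(V(H),A)$, and $\widehat{Z}_H(q,\mathbf{v})=\sum_{A\subseteq E(H)}q^{k(A)-1}\prod_{e\in A}v_e$ (a polynomial, for $V(H)\ne\emptyset$). $\Pi(V)$ is the set of unordered partitions of $V$ into nonempty blocks, $|\pi|$ is the number of blocks, and $G[B]$ is the induced subgraph on $B$. For an element $r$, $r^{\underline{k}}=r(r-1)\cdots(r-k+1)$ is the falling factorial; the first identity is read in the field of rational functions in $q_1,q_2,\mathbf{v}$ (equivalently, with $q_2=rq_1$ and $r$ an indeterminate). *)

From HB Require Import structures.
From mathcomp Require Import all_boot all_order all_algebra.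
Set Implicit Arguments. Unset Strict Implicit. Unset Printing Implicit Defensive.
Import Order.TTheory GRing.Theory Num.Theory.
Local Open Scope ring_scope.

(* A finite multigraph: vertex type V, edge type E, each edge e has
   endpoints src e and tgt e (loopless means src e != tgt e). *)
Section Tutte.
Variables (V E : finType) (src tgt : E -> V).

Definition adjE (A : {set E}) : rel V :=
  fun x y => [exists e in A, ((src e == x) && (tgt e == y)) ||
                             ((src e == y) && (tgt e == x))].

Definition inducedE (B : {set V}) : {set E} :=
  [set e | (src e \in B) && (tgt e \in B)].

Definition ncomp (B : {set V}) (A : {set E}) : nat :=
  #|[set [set y in B | connect (adjE A) x y] | x in B]|.

Variable R : comRingType.

Definition tutteZ (B : {set V}) (q : R) (v : E -> R) : R :=
  \sum_(A : {set E} | A \subset inducedE B)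
     q ^+ ncomp B A * \prod_(e in A) v e.

Definition tutteZhat (B : {set V}) (q : R) (v : E -> R) : R :=
  \sum_(A : {set E} | A \subset inducedE B)
     q ^+ (ncomp B A).-1 * \prod_(e in A) v e.

End Tutte.

Definition falling (R : ringType) (r : R) (k : nat) : R :=
  \prod_(j < k) (r - j%:R).

From HB Require Import structures.
From mathcomp Require Import all_boot all_order all_algebra.
From mathcomp Require Import ring.
Set Implicit Arguments. Unset Strict Implicit. Unset Printing Implicit Defensive.
Import Order.TTheory GRing.Theory Num.Theory.
Local Open Scope ring_scope.

(* Fix x0 in S.  For an edge set A inside S, the sets B containing x0 that no
   edge of A crosses are exactly the unions of the component of x0 with a set T
   of other components of (S, A); summing q1^|T| (q - q1)^(k(A) - 1 - |T|)
   over T gives q^(k(A) - 1) by the binomial theorem.  Hence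
     Zhat_S(q) = \sum_(x0 \in B \subset S) Zhat_B(q1) Z_(S \ B)(q - q1),
   and induction on |S|, splitting off the block of x0 from each partition of
   S, gives the two polynomial expansions.  The falling-factorial form follows
   from Z_B(q1) = q1 Zhat_B(q1) once q1 is invertible. *)

Lemma connect_restrict (T : finType) (e e' : rel T) (a : {pred T}) :
    (forall x y, x \in a -> e x y -> e' x y /\ y \in a) ->
  forall x y, x \in a -> connect e x y -> connect e' x y /\ y \in a.
Proof.
move=> closed x y ax /connectP[p pth ->] {y}.
elim: p x ax pth => [|z p IHp] x ax /=; first by rewrite connect0.
case/andP=> exz pth; have [e'xz az] := closed _ _ ax exz.
have [e'zy ay] := IHp _ az pth.
by split=> //; apply: connect_trans (connect1 e'xz) e'zy.
Qed.

Section SubsetSums.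
Variables (T : finType) (Y Z : {set T}).
Hypothesis dYZ : [disjoint Y & Z].

Lemma setUI_disjoint (X1 X2 : {set T}) : X1 \subset Y -> X2 \subset Z ->
  (X1 :|: X2) :&: Y = X1 /\ (X1 :|: X2) :&: Z = X2.
Proof.
move=> sX1 sX2; have dZY : [disjoint Z & Y] by rewrite disjoint_sym.
rewrite !setIUl (setIidPl sX1) (setIidPl sX2).
rewrite (disjoint_setI0 (disjointWl sX2 dZY)) (disjoint_setI0 (disjointWl sX1 dYZ)).
by rewrite setU0 set0U.
Qed.

Lemma sum_subsetU (R : nmodType) (F : {set T} -> {set T} -> R) :
  \sum_(X1 : {set T} | X1 \subset Y) \sum_(X2 : {set T} | X2 \subset Z) F X1 X2 =
  \sum_(X : {set T} | X \subset Y :|: Z) F (X :&: Y) (X :&: Z).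
Proof.
rewrite pair_big /= (reindex_onto (fun p : {set T} * {set T} => p.1 :|: p.2)
                      (fun X => (X :&: Y, X :&: Z))) /=; last first.
  by move=> X sX; rewrite -setIUr; apply/setIidPl.
apply: eq_big => [[X1 X2]|[X1 X2]] /=.
  apply/idP/andP => [/andP[s1 s2]|[_ /eqP[<- <-]]]; last by rewrite !subsetIr.
  by have [-> ->] := setUI_disjoint s1 s2; rewrite eqxx setUSS.
by case/andP=> s1 s2; have [-> ->] := setUI_disjoint s1 s2.
Qed.

Lemma sum_subsetU_split (R : nmodType) (f : {set T} -> R) :
  \sum_(X : {set T} | X \subset Y :|: Z) f X =
  \sum_(X1 : {set T} | X1 \subset Y) \sum_(X2 : {set T} | X2 \subset Z) f (X1 :|: X2).
Proof.
rewrite (sum_subsetU (fun X1 X2 => f (X1 :|: X2))).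
by apply: eq_bigr => X sX; rewrite -setIUr (setIidPl sX).
Qed.

End SubsetSums.

Lemma sum_subset_binomial (R : comPzSemiRingType) (T : finType) (D : {set T}) (a b : R) :
  \sum_(X : {set T} | X \subset D) a ^+ #|X| * b ^+ #|D :\: X| = (a + b) ^+ #|D|.
Proof.
move: {2}#|D| (erefl #|D|) => n; elim: n D => [|n IHn] D cardD.
  move/eqP: cardD; rewrite cards_eq0 => /eqP ->.
  rewrite (eq_bigl (pred1 set0)) => [|X]; last by rewrite /= subset0.
  by rewrite big_pred1_eq cards0 set0D cards0 !expr0 mulr1.
have [x xD] : exists x, x \in D by apply/set0Pn; rewrite -card_gt0 cardD.
have cardDx : #|D :\ x| = n by move: cardD; rewrite (cardsD1 x) xD => -[].
have dxD : [disjoint [set x] & D :\ x] by rewrite disjoints1 !inE eqxx.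
rewrite -(setD1K xD) (sum_subsetU_split dxD) cardsU1 !inE eqxx /= add1n.
rewrite (eq_bigl (mem [set set0; [set x]])) => [|X]; last by rewrite /= -powerset1 powersetE.
rewrite big_setU1 ?big_set1 /=; last by rewrite inE; apply/eqP => /setP/(_ x); rewrite !inE eqxx.
rewrite exprS -(IHn _ cardDx) mulrDl !big_distrr /= addrC.
have xX (X : {set T}) : X \subset D :\ x -> x \notin X.
  by move=> sX; apply/negP => /(subsetP sX); rewrite !inE eqxx.
congr (_ + _); apply: eq_bigr => X sX.
  have -> : (x |: D :\ x) :\: (x |: X) = D :\ x :\: X.
    by apply/setP => y; rewrite !inE; case: eqP; rewrite /= ?andbF.
  by rewrite cardsU1 (xX X sX) add1n exprS mulrA.
have -> : (x |: D :\ x) :\: (set0 :|: X) = x |: (D :\ x :\: X).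
  by rewrite set0U; apply/setP => y; rewrite !inE; case: eqP => // ->; rewrite (negPf (xX X sX)).
by rewrite set0U cardsU1 !inE eqxx andbF add1n exprS mulrCA.
Qed.

Lemma sum_partition_block (R : nmodType) (T : finType) (S : {set T}) x0
    (F : {set {set T}} -> R) : x0 \in S ->
  \sum_(P : {set {set T}} | partition P S) F P =
  \sum_(B : {set T} | (x0 \in B) && (B \subset S))
     \sum_(P : {set {set T}} | partition P (S :\: B)) F (B |: P).
Proof.
move=> x0S; rewrite (partition_big (fun P => pblock P x0)
           (fun B => (x0 \in B) && (B \subset S))) /=; last first.
  move=> P partP; have coverP := cover_partition partP.
  rewrite mem_pblock coverP x0S /=; apply: (partitionS partP).
  by apply: pblock_mem; rewrite coverP.
apply: eq_bigr => B /andP[x0B BS].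
have BnotinP P : partition P (S :\: B) -> B \notin P.
  move=> partP; apply/negP => /(partitionS partP) /subsetP /(_ x0 x0B).
  by rewrite inE x0B.
rewrite (reindex_onto (fun P => B |: P) (fun P => P :\ B)) /=; last first.
  move=> P /andP[partP /eqP <-]; rewrite setD1K //; apply: pblock_mem.
  by rewrite (cover_partition partP).
apply: eq_bigl => P; apply/idP/idP => [/andP[/andP[partP _] /eqP <-]|partP].
  exact: partitionD1 partP (setU11 _ _).
rewrite setU1K ?BnotinP // eqxx andbT.
have partBP : partition (B |: P) S.
  have B0 : B != set0 by apply/set0Pn; exists x0.
  have dB : [disjoint B & S :\: B] by rewrite disjoint_sym; case/subsetDP: (subxx (S :\: B)).
  by have := partitionU1 partP B0 dB; rewrite -{2}(setID S B) (setIidPr BS).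
by rewrite partBP (def_pblock (partition_trivIset partBP) (setU11 _ _) x0B) eqxx.
Qed.

Section Components.
Variables (V E : finType) (src tgt : E -> V).
Local Notation adj := (adjE src tgt).
Local Notation EI := (inducedE src tgt).

Lemma adjEP (A : {set E}) x y : reflect (exists2 e, e \in A &
   ((src e == x) && (tgt e == y)) || ((src e == y) && (tgt e == x))) (adj A x y).
Proof.
apply: (iffP existsP) => [[e /andP[eA h]]|[e eA h]]; first by exists e.
by exists e; rewrite eA.
Qed.

Lemma adjE_sym A : symmetric (adj A).
Proof. by move=> x y; apply/adjEP/adjEP => -[e eA h]; exists e; rewrite // orbC. Qed.

Lemma connect_adjE_subset (A A' : {set E}) x y : A' \subset A ->
  connect (adj A') x y -> connect (adj A) x y.
Proof.
move=> /subsetP sA'A; apply: connect_sub => u w /adjEP[e eA' h].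
by apply: connect1; apply/adjEP; exists e; first exact: sA'A.
Qed.

Lemma connect_adjE_equiv (A : {set E}) (D : {set V}) :
  {in D & &, equivalence_rel (connect (adj A))}.
Proof.
move=> x y z _ _ _; split=> [|xy]; first exact: connect0.
have cs := sym_connect_sym (adjE_sym A).
by apply/idP/idP => h; apply: connect_trans h; rewrite // cs.
Qed.

Definition components (S : {set V}) (A : {set E}) :=
  equivalence_partition (connect (adj A)) S.

Lemma ncompE S A : ncomp src tgt S A = #|components S A|.
Proof. by []. Qed.

Lemma components_partition S A : partition (components S A) S.
Proof. exact: equivalence_partitionP (@connect_adjE_equiv A S). Qed.

Lemma ncomp_gt0 S A : S != set0 -> (0 < ncomp src tgt S A)%N.
Proof.
case/set0Pn => x xS; rewrite ncompE card_gt0; apply/set0Pn.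
exists (pblock (components S A) x); apply: pblock_mem.
by rewrite (cover_partition (components_partition S A)).
Qed.

Lemma ncomp_set0 A : ncomp src tgt set0 A = 0%N.
Proof.
by apply/eqP; rewrite ncompE cards_eq0 -partition_set0 components_partition.
Qed.

Lemma inducedE_subset (B S : {set V}) : B \subset S -> EI B \subset EI S.
Proof.
move=> /subsetP sBS; apply/subsetP => e; rewrite !inE => /andP[srcB tgtB].
by rewrite !sBS.
Qed.

Definition cutfree (S : {set V}) (A : {set E}) (B : {set V}) :=
  A \subset EI B :|: EI (S :\: B).

Lemma cutfree_setD (S : {set V}) A (B : {set V}) : B \subset S ->
  cutfree S A B -> cutfree S A (S :\: B).
Proof. by move=> BS; rewrite /cutfree setDDr setDv set0U (setIidPr BS) setUC. Qed.

Lemma cutfree_adjE S A (B : {set V}) : cutfree S A B ->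
  forall x y, x \in B -> adj A x y -> adj (A :&: EI B) x y /\ y \in B.
Proof.
move=> /subsetP cutB x y xB /adjEP[e eA h]; have := cutB e eA.
rewrite !inE => /orP[/andP[srcB tgtB]|/andP[/andP[srcB _] /andP[tgtB _]]].
  split; last by case/orP: h => /andP[/eqP ex /eqP ey]; rewrite -?ey -?ex.
  by apply/adjEP; exists e; rewrite // !inE eA srcB tgtB.
by case/orP: h => /andP[/eqP ex /eqP ey]; move: srcB tgtB; rewrite ex ey xB.
Qed.

Section ComponentsOf.
Variables (S : {set V}) (A : {set E}).
Hypothesis AS : A \subset EI S.
Local Notation C := (components S A).
Let partC := components_partition S A.

Lemma pblock_componentsE x y : x \in S -> y \in S ->
  (y \in pblock C x) = connect (adj A) x y.
Proof. exact: (pblock_equivalence_partition (@connect_adjE_equiv A S)). Qed.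

Lemma pblock_components x : x \in S -> pblock C x \in C.
Proof. by move=> xS; apply: pblock_mem; rewrite (cover_partition partC). Qed.

Lemma mem_pblock_components x : x \in S -> x \in pblock C x.
Proof. by move=> xS; rewrite mem_pblock (cover_partition partC). Qed.

Lemma component_uniq c d y : c \in C -> d \in C -> y \in c -> y \in d -> c = d.
Proof.
move=> cC dC yc yd; have tC := partition_trivIset partC.
by rewrite -(def_pblock tC cC yc) -(def_pblock tC dC yd).
Qed.

Lemma pblock_sub_cutfree (B : {set V}) x : B \subset S -> cutfree S A B ->
  x \in B -> pblock C x \subset B.
Proof.
move=> /subsetP BS cutB xB; apply/subsetP => y xy; have xS := BS x xB.
have yS := subsetP (partitionS partC (pblock_components xS)) y xy.
rewrite (pblock_componentsE xS yS) in xy.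
by case: (connect_restrict (cutfree_adjE cutB) xB xy).
Qed.

Lemma cover_components_sub (B : {set V}) : B \subset S -> cutfree S A B ->
  cover [set c in C | c \subset B] = B.
Proof.
move=> BS cutB; apply/setP => x; apply/bigcupP/idP => [[c]|xB].
  by rewrite inE => /andP[_ /subsetP]; apply.
exists (pblock C x); last exact: mem_pblock_components (subsetP BS x xB).
by rewrite inE pblock_components ?(subsetP BS) ?pblock_sub_cutfree.
Qed.

Lemma components_cutfree (B : {set V}) : B \subset S -> cutfree S A B ->
  components B (A :&: EI B) = [set c in C | c \subset B].
Proof.
move=> BS cutB; have restr := connect_restrict (cutfree_adjE cutB).
have pblockB x : x \in B ->
    [set y in B | connect (adj (A :&: EI B)) x y] = pblock C x.
  move=> xB; have xS := subsetP BS x xB; apply/setP => y; rewrite inE.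
  apply/andP/idP => [[yB xy]|xy].
    rewrite pblock_componentsE ?(subsetP BS) //.
    exact: connect_adjE_subset (subsetIl _ _) xy.
  have yS := subsetP (partitionS partC (pblock_components xS)) y xy.
  by rewrite pblock_componentsE // in xy; case: (restr _ _ xB xy) => ->.
apply/setP => c; rewrite inE; apply/imsetP/andP => [[x xB ->]|[cC cB]].
  by rewrite pblockB // pblock_components ?(subsetP BS) ?pblock_sub_cutfree.
have [x xc] := set0Pn _ (partition_neq0 partC cC).
have xB := subsetP cB x xc.
by exists x; rewrite // pblockB // (def_pblock (partition_trivIset partC) cC xc).
Qed.

Section CoverOfComponents.
Variable T : {set {set V}}.
Hypothesis TC : T \subset C.

Lemma cover_components_subset : cover T \subset S.
Proof. by apply/bigcupsP => c /(subsetP TC); apply: partitionS partC. Qed.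

Lemma mem_cover_components c y : c \in C -> y \in c -> (y \in cover T) = (c \in T).
Proof.
move=> cC yc; apply/bigcupP/idP => [[d dT yd]|cT]; last by exists c.
by rewrite (component_uniq cC (subsetP TC d dT) yc yd).
Qed.

Lemma components_sub_cover : [set c in C | c \subset cover T] = T.
Proof.
apply/setP => c; rewrite inE; apply/andP/idP => [[cC cT]|cT].
  have [x xc] := set0Pn _ (partition_neq0 partC cC).
  by rewrite -(mem_cover_components cC xc) (subsetP cT).
by split; [apply: subsetP TC c cT | apply: bigcup_sup].
Qed.

Lemma components_sub_setD_cover : [set c in C | c \subset S :\: cover T] = C :\: T.
Proof.
apply/setP => c; rewrite !inE andbC; case: (boolP (c \in C)) => cC; rewrite ?andbF // !andbT.
have [x xc] := set0Pn _ (partition_neq0 partC cC).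
apply/subsetP/idP => [/(_ x xc)|cT y yc].
  by rewrite inE (mem_cover_components cC xc) => /andP[].
by rewrite inE (mem_cover_components cC yc) cT (subsetP (partitionS partC cC)).
Qed.

Lemma cutfree_cover : cutfree S A (cover T).
Proof.
apply/subsetP => e eA; have := subsetP AS e eA; rewrite inE => /andP[srcS tgtS].
have same : pblock C (src e) = pblock C (tgt e).
  apply: (same_pblock (partition_trivIset partC)).
  by rewrite pblock_componentsE // connect1 //; apply/adjEP; exists e; rewrite // !eqxx orbT.
have := mem_cover_components (pblock_components srcS) (mem_pblock_components srcS).
have := mem_cover_components (pblock_components tgtS) (mem_pblock_components tgtS).
by rewrite !inE srcS tgtS -same => -> ->; case: (_ \in T).
Qed.

End CoverOfComponents.

Lemma sum_cutfree_blocks (R : comPzRingType) x0 (a b : R) : x0 \in S ->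
  \sum_(B : {set V} | (x0 \in B) && (B \subset S) && cutfree S A B)
     a ^+ (ncomp src tgt B (A :&: EI B)).-1 *
     (b - a) ^+ ncomp src tgt (S :\: B) (A :&: EI (S :\: B))
  = b ^+ (ncomp src tgt S A).-1.
Proof.
move=> x0S; set c0 := pblock C x0; have c0C : c0 \in C by apply: pblock_components.
(* B <-> T, where B = cover (c0 |: T) and T is a set of components other than c0. *)
rewrite (reindex_onto (fun T => cover (c0 |: T))
          (fun B => [set c in C | c \subset B] :\ c0)) /=; last first.
  move=> B /andP[/andP[x0B BS] cutB]; rewrite setD1K ?cover_components_sub //.
  by rewrite inE c0C pblock_sub_cutfree.
have c0TC (T : {set {set V}}) : T \subset C :\ c0 -> c0 |: T \subset C.
  by rewrite subsetD1 subUset sub1set c0C => /andP[].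
transitivity (\sum_(T : {set {set V}} | T \subset C :\ c0)
    a ^+ #|T| * (b - a) ^+ #|(C :\ c0) :\: T|).
  have selC (X : {set V}) : [set c in C | c \subset X] :\ c0 \subset C :\ c0.
    by apply: setSD; apply/subsetP => c /setIdP[].
  apply: eq_big => [T|T /andP[_ /eqP defT]].
    apply/andP/idP => [[_ /eqP <-] //|TC].
    have c0T : c0 \notin T by move: TC; rewrite subsetD1 => /andP[].
    rewrite components_sub_cover ?c0TC // setU1K // eqxx; split=> //.
    rewrite cover_components_subset ?cutfree_cover ?c0TC // !andbT.
    by apply/bigcupP; exists c0; rewrite ?setU11 ?mem_pblock_components.
  have TC : T \subset C :\ c0 by rewrite -defT.
  have c0T : c0 \notin T by move: TC; rewrite subsetD1 => /andP[].
  have coverS := cover_components_subset (c0TC _ TC).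
  have cutT := cutfree_cover (c0TC _ TC).
  rewrite !ncompE components_cutfree // components_sub_cover ?c0TC //.
  rewrite components_cutfree ?subsetDl ?cutfree_setD // components_sub_setD_cover ?c0TC //.
  by rewrite cardsU1 c0T -setDDl.
by rewrite sum_subset_binomial addrC subrK ncompE (cardsD1 c0 C) c0C.
Qed.

End ComponentsOf.

Lemma tutteZhat_block_recursion (R : comNzRingType) (S : {set V}) x0 (a b : R)
    (v : E -> R) : x0 \in S ->
  tutteZhat src tgt S b v =
  \sum_(B : {set V} | (x0 \in B) && (B \subset S))
     tutteZhat src tgt B a v * tutteZ src tgt (S :\: B) (b - a) v.
Proof.
move=> x0S.
have splitE (B : {set V}) : B \subset S ->
  tutteZhat src tgt B a v * tutteZ src tgt (S :\: B) (b - a) v =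
  \sum_(A : {set E} | A \subset EI S)
    (if cutfree S A B then a ^+ (ncomp src tgt B (A :&: EI B)).-1 *
        (b - a) ^+ ncomp src tgt (S :\: B) (A :&: EI (S :\: B)) else 0)
    * \prod_(e in A) v e.
  move=> BS; rewrite /tutteZhat /tutteZ big_distrlr /=.
  have dE : [disjoint EI B & EI (S :\: B)].
    by rewrite -setI_eq0; apply/eqP/setP => e; rewrite !inE; case: (src e \in B); rewrite ?andbF.
  rewrite (sum_subsetU dE (fun A1 A2 => (a ^+ (ncomp src tgt B A1).-1 * \prod_(e in A1) v e) *
     ((b - a) ^+ ncomp src tgt (S :\: B) A2 * \prod_(e in A2) v e))).
  rewrite [RHS](bigID (cutfree S ^~ B)) /= [X in _ = _ + X]big1 ?addr0; last first.
    by move=> A /andP[_ /negbTE ->]; rewrite mul0r.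
  apply: eq_big => [A|A cutA].
    apply/idP/andP => [cutA|[]//]; split=> //; apply: subset_trans cutA _.
    by rewrite subUset !inducedE_subset ?subsetDl.
  rewrite /cutfree cutA [in RHS](big_setID (EI B)) /= mulrACA.
  have -> // : A :\: EI B = A :&: EI (S :\: B).
  apply/setP => e; rewrite !inE; have := subsetP cutA e; rewrite !inE.
  by case: (e \in A); case: (src e \in B); case: (tgt e \in B); rewrite ?andbF //= => ->.
rewrite (eq_bigr _ (fun B hB => splitE B (proj2 (andP hB)))) exchange_big /=.
apply: eq_bigr => A AS; rewrite -big_distrl /= -big_mkcondr.
by rewrite (sum_cutfree_blocks AS).
Qed.

End Components.

Definition falling_step (R : pzRingType) (q h : R) (m : nat) : R :=
  \prod_(j < m) (q - j%:R * h).

Lemma falling_stepS (R : comPzRingType) (q h : R) m :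
  falling_step q h m.+1 = q * falling_step (q - h) h m.
Proof.
rewrite /falling_step big_ord_recl mul0r subr0; congr (_ * _).
by apply: eq_bigr => j _; rewrite lift0 -addn1 natrD; ring.
Qed.

Lemma big_nat1_falling_step (R : comPzRingType) (q h : R) m :
  \prod_(1 <= j < m.+1) (q - j%:R * h) = falling_step (q - h) h m.
Proof.
rewrite big_add1 /= big_mkord; apply: eq_bigr => j _.
by rewrite -addn1 natrD; ring.
Qed.

Lemma falling_stepE (R : fieldType) (q h : R) m : h != 0 ->
  falling_step q h m = falling (q / h) m * h ^+ m.
Proof.
move=> h0; have -> : h ^+ m = \prod_(j < m) h by rewrite prodr_const card_ord.
rewrite /falling -big_split /=.
by apply: eq_bigr => j _; rewrite mulrBl divfK.
Qed.

Section PartitionExpansion.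
Variables (V E : finType) (src tgt : E -> V) (R : comNzRingType) (v : E -> R) (q1 : R).
Local Notation Z S q := (tutteZ src tgt S q v).
Local Notation Zhat S q := (tutteZhat src tgt S q v).

Lemma tutteZE S q : S != set0 -> Z S q = q * Zhat S q.
Proof.
move=> S0; rewrite /tutteZ /tutteZhat big_distrr; apply: eq_bigr => A _ /=.
by rewrite mulrA -exprS prednK // ncomp_gt0.
Qed.

Lemma tutteZ_set0 q : Z set0 q = 1.
Proof.
rewrite /tutteZ (eq_bigl (pred1 set0)) => [|A].
  by rewrite big_pred1_eq ncomp_set0 big_set0 mulr1.
have -> : inducedE src tgt set0 = set0 by apply/setP => e; rewrite !inE.
by rewrite /= subset0.
Qed.

Lemma prod_tutteZE (P : {set {set V}}) (S : {set V}) q : partition P S ->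
  \prod_(B in P) Z B q = q ^+ #|P| * \prod_(B in P) Zhat B q.
Proof.
move=> partP; rewrite -prodr_const -big_split /=; apply: eq_bigr => B BP.
by rewrite tutteZE // (partition_neq0 partP BP).
Qed.

Lemma tutteZhat_expansion_rec (S : {set V}) x0 q : x0 \in S ->
  (forall B : {set V}, x0 \in B -> B \subset S ->
     Z (S :\: B) (q - q1) = \sum_(P : {set {set V}} | partition P (S :\: B))
        falling_step (q - q1) q1 #|P| * \prod_(B' in P) Zhat B' q1) ->
  Zhat S q = \sum_(P : {set {set V}} | partition P S)
    (\prod_(1 <= j < #|P|) (q - j%:R * q1)) * \prod_(B in P) Zhat B q1.
Proof.
move=> x0S expandZ; rewrite (tutteZhat_block_recursion _ _ q1 q v x0S).
rewrite (sum_partition_block _ x0S); apply: eq_bigr => B /andP[x0B BS].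
rewrite expandZ // big_distrr; apply: eq_bigr => P partP /=.
have BnotinP : B \notin P.
  by apply/negP => /(partitionS partP) /subsetP /(_ x0 x0B); rewrite inE x0B.
by rewrite cardsU1 BnotinP big_nat1_falling_step big_setU1 //= mulrCA.
Qed.

Lemma tutteZ_partition_expansion (S : {set V}) q :
  Z S q = \sum_(P : {set {set V}} | partition P S)
    falling_step q q1 #|P| * \prod_(B in P) Zhat B q1.
Proof.
elim: {S}_.+1 {-2}S (ltnSn #|S|) q => // n IHn S cardS q.
have [->|S0] := eqVneq S set0.
  rewrite tutteZ_set0 (eq_bigl (pred1 set0)) => [|P]; last by rewrite /= partition_set0.
  by rewrite big_pred1_eq cards0 /falling_step big_ord0 big_set0 mulr1.
have [x0 x0S] := set0Pn _ S0.
rewrite tutteZE // (tutteZhat_expansion_rec x0S) => [|B x0B BS]; last first.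
  apply: IHn; rewrite -ltnS (leq_trans _ cardS) // ltnS proper_card //.
  by rewrite properE subsetDl; apply/subsetPn; exists x0; rewrite // inE x0B.
rewrite big_distrr; apply: eq_bigr => P partP /=.
have : (0 < #|P|)%N.
  rewrite card_gt0; apply/set0Pn; exists (pblock P x0).
  by rewrite pblock_mem // (cover_partition partP).
by case: #|P| => // m _; rewrite big_nat1_falling_step falling_stepS mulrA.
Qed.

Lemma tutteZhat_partition_expansion (S : {set V}) q : S != set0 ->
  Zhat S q = \sum_(P : {set {set V}} | partition P S)
    (\prod_(1 <= j < #|P|) (q - j%:R * q1)) * \prod_(B in P) Zhat B q1.
Proof.
case/set0Pn => x0 x0S; apply: (tutteZhat_expansion_rec x0S) => B _ _.
exact: tutteZ_partition_expansion.
Qed.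

End PartitionExpansion.

Unset Implicit Arguments. Set Strict Implicit.

(* Loops never change connectivity. *)
Theorem proposition3p4 (R : fieldType) (V E : finType) (src tgt : E -> V)
    (loopless : forall e : E, src e != tgt e)
    (Vne : (0 < #|V|)%N)
    (v : E -> R) (q1 q2 : R) :
  (q1 != 0 ->
     tutteZ src tgt [set: V] q2 v =
     \sum_(P : {set {set V}} | partition P [set: V])
        falling (q2 / q1) #|P| * \prod_(B in P) tutteZ src tgt B q1 v)
  /\
  tutteZ src tgt [set: V] q2 v =
     \sum_(P : {set {set V}} | partition P [set: V])
        (\prod_(j < #|P|) (q2 - j%:R * q1)) *
        \prod_(B in P) tutteZhat src tgt B q1 v
  /\
  tutteZhat src tgt [set: V] q2 v =
     \sum_(P : {set {set V}} | partition P [set: V])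
        (\prod_(1 <= j < #|P|) (q2 - j%:R * q1)) *
        \prod_(B in P) tutteZhat src tgt B q1 v.
Proof.
have V0 : [set: V] != set0 by rewrite -card_gt0 cardsT.
split; [move=> q10 | split; last exact: tutteZhat_partition_expansion].
  rewrite (tutteZ_partition_expansion _ _ _ q1); apply: eq_bigr => P partP.
  by rewrite (prod_tutteZE _ _ _ q1 partP) falling_stepE // mulrA.
exact: tutteZ_partition_expansion.
Qed.
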